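(* Let $$\tau_1(x)=\begin{cases}\tfrac43x,&0\le x<\tfrac38,\\ 4x-1,&\tfrac38\le x<\tfrac12,\\ -4x+3,&\tfrac12\le x<\tfrac58,\\ -\tfrac43x+\tfrac43,&\tfrac58\le x\le1,\end{cases}\qquad \tau_2(x)=\begin{cases}3x,&0\le x<\tfrac16,\\ \tfrac32x+\tfrac14,&\tfrac16\le x<\tfrac12,\\ -\tfrac32x+\tfrac74,&\tfrac12\le x<\tfrac56,\\ -3x+3,&\tfrac56\le x\le1.\end{cases}$$ Then $\tau_1$ preserves the density $f_1=\frac32\chi_{[0,1/2]}+\frac12\chi_{[1/2,1]}$, $\tau_2$ preserves $f_2=\frac23\chi_{[0,1/2]}+\frac43\chi_{[1/2,1]}$, and $1=\frac25f_1+\frac35f_2$. Nevertheless, there is no Borel measurable map $\eta:[0,1]\to[0,1]$ with $\eta(x)\in\{\tau_1(x),\tau_2(x)\}$ for every $x$ that preserves Lebesgue measure. On the other hand, the map $$\tau(x)=\begin{cases}\tau_2(x),&0\le x<\tfrac12,\\ -3x+\tfrac52,&\tfrac12\le x<\tfrac23,\\ -\tfrac32x+\tfrac32,&\tfrac23\le x\le1\end{cases}$$ satisfies $\tau_1\le\tau\le\tau_2$ and preserves Lebesgue measure.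
   Context: A probability density $f$ is preserved by $\tau$ if $\int_{\tau^{-1}(A)}f\,dx=\int_A f\,dx$ for every Borel $A\subseteq[0,1]$; preserving Lebesgue measure means preserving the density $1$. *)

From Stdlib Require Import Reals Lra ClassicalEpsilon.
Open Scope R_scope.

Inductive borel : (R -> Prop) -> Prop :=
| borel_ray (a : R) : borel (fun x => x < a)
| borel_compl (A : R -> Prop) : borel A -> borel (fun x => ~ A x)
| borel_union (F : nat -> R -> Prop) :
    (forall n, borel (F n)) -> borel (fun x => exists n, F n x)
| borel_ext (A B : R -> Prop) : borel A -> (forall x, A x <-> B x) -> borel B.

Definition unit_interval (x : R) : Prop := 0 <= x <= 1.

Definition subset01 (A : R -> Prop) : Prop := forall x, A x -> unit_interval x.

Definition is_cover_sum (A : R -> Prop) (s : R) : Prop :=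
  exists a b : nat -> R,
    (forall n, a n <= b n) /\
    (forall x, A x -> exists n, a n < x < b n) /\
    infinite_sum (fun n => b n - a n) s.

Definition is_outer_measure (A : R -> Prop) (r : R) : Prop :=
  (forall s, is_cover_sum A s -> r <= s) /\
  (forall r', (forall s, is_cover_sum A s -> r' <= s) -> r' <= r).

(** Lebesgue (outer) measure; well defined (the infimum exists) for bounded A,
    in particular for subsets of [0,1], which is the only use below. *)
Definition leb (A : R -> Prop) : R :=
  epsilon (inhabits 0) (is_outer_measure A).

Definition inter (A B : R -> Prop) : R -> Prop := fun x => A x /\ B x.
Definition I_left (x : R) : Prop := 0 <= x < 1/2.
Definition I_right (x : R) : Prop := 1/2 <= x <= 1.

Definition preim (tau : R -> R) (A : R -> Prop) : R -> Prop :=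
  fun x => unit_interval x /\ A (tau x).

Definition step_density (c1 c2 : R) (x : R) : R :=
  if Rlt_dec x (1/2) then c1 else c2.

Definition step_integral (c1 c2 : R) (A : R -> Prop) : R :=
  c1 * leb (inter A I_left) + c2 * leb (inter A I_right).

Definition preserves_step_density (c1 c2 : R) (tau : R -> R) : Prop :=
  forall A, borel A -> subset01 A ->
    step_integral c1 c2 (preim tau A) = step_integral c1 c2 A.

Definition preserves_lebesgue (tau : R -> R) : Prop :=
  forall A, borel A -> subset01 A -> leb (preim tau A) = leb A.

Definition borel_measurable01 (eta : R -> R) : Prop :=
  forall A, borel A -> subset01 A -> borel (preim eta A).

Definition tau1 (x : R) : R :=
  if Rlt_dec x (3/8) then 4/3 * x
  else if Rlt_dec x (1/2) then 4 * x - 1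
  else if Rlt_dec x (5/8) then -4 * x + 3
  else -4/3 * x + 4/3.

Definition tau2 (x : R) : R :=
  if Rlt_dec x (1/6) then 3 * x
  else if Rlt_dec x (1/2) then 3/2 * x + 1/4
  else if Rlt_dec x (5/6) then -3/2 * x + 7/4
  else -3 * x + 3.

Definition tau (x : R) : R :=
  if Rlt_dec x (1/2) then tau2 x
  else if Rlt_dec x (2/3) then -3 * x + 5/2
  else -3/2 * x + 3/2.

(** Each of [tau1], [tau2] and [tau] is piecewise affine on [[0,1]] with four
    branches, two of them on [[0,1/2)] and two on [[1/2,1]].  On an affine
    branch [x |-> c x + d] the change of variables
    [mu (pullback S c d) = mu S / |c|] computes the measure of the part of a
    preimage lying on that branch; the three invariance statements then reduce
    to linear identities between the measures of the two halves of a set.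

    For the non-existence of a measure-preserving Borel selection [eta], note
    that only four branches of [tau1] and [tau2] reach [J = (1/2,1)], with
    slopes [4, -4, 3/2, -3/2].  Split [J] into the sixteen Borel atoms
    according to which of these branches [eta] follows at the preimages of a
    point.  Invariance of an atom [S] reads [mu S = w * mu S] with [w] a sum of
    a subfamily of [1/4, 1/4, 2/3, 2/3]; no such sum equals [1], so every atom
    is null, and so would be [J]. *)

From Stdlib Require Import Reals Lra ClassicalEpsilon.
Set Warnings "-notation-overridden,-ambiguous-paths,-notation-incompatible-prefix".
From HB Require Import structures.
From mathcomp Require Import all_boot all_order all_algebra.
From mathcomp Require Import all_classical all_reals all_analysis.
From mathcomp Require Import Rstruct Rstruct_topology measurable_realfun.
Import Order.TTheory GRing.Theory Num.Theory.
From Pilot Require Import Defs.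

Local Open Scope R_scope.

Notation Rm := (measurableTypeR R).
Notation lam := (@lebesgue_measure R).

Section BorelMeasurable.
Local Open Scope classical_set_scope.
Local Open Scope ring_scope.

Lemma borel_measurable (A : R -> Prop) : borel A -> measurable (A : set Rm).
Proof.
elim=> {A} [a | A _ mA | F _ mF | A B _ mA AB].
- rewrite (_ : (fun x => Rlt x a) = `]-oo, a[%classic); first exact: measurable_itv.
  by rewrite predeqE => x /=; rewrite in_itv /=; split => /RltP.
- by rewrite (_ : (fun x => ~ A x) = ~` A); [exact: measurableC | rewrite predeqE].
- rewrite (_ : (fun x => exists n, F n x) = \bigcup_n (F n : set Rm)).
    exact: bigcupT_measurable.
  by rewrite predeqE => x; split => [[n h]|[n _ h]]; exists n.
- by rewrite (_ : B = A) // predeqE => x; split => /AB.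
Qed.

Lemma borel_inter (A B : R -> Prop) : borel A -> borel B -> borel (fun x => A x /\ B x).
Proof.
move=> bA bB; pose F (n : nat) := if n is 0%N then (fun x => ~ A x) else (fun x => ~ B x).
apply: (borel_ext (fun x => ~ exists n, F n x)).
  by apply: borel_compl; apply: borel_union => -[|n] /=; exact: borel_compl.
move=> x; split; last by move=> [hA hB] [[|n] /=].
move=> h; split; apply: Classical_Prop.NNPP => nAB; apply: h.
  by exists 0%N.
by exists 1%N.
Qed.

Lemma borel_le (b : R) : borel (fun x => Rle x b).
Proof.
apply: (borel_ext (fun x => ~ exists n : nat, ~ Rlt x (b + n.+1%:R^-1))).
  by apply: borel_compl; apply: borel_union => n; apply: borel_compl; exact: borel_ray.
move=> x; split.
  move=> h; apply/RleP; rewrite leNgt; apply/negP => /ltr_add_invr [k hk].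
  by apply: h; exists k => /RltP; rewrite ltNge => /negP; apply; apply: ltW.
move=> /RleP h [n]; apply; apply/RltP.
by apply: (le_lt_trans h); rewrite ltrDl invr_gt0 ltr0Sn.
Qed.

(** The measurable sets are [borel]: they form the smallest sigma-algebra
    containing the intervals [(a,b]], and [borel] is such a sigma-algebra. *)
Lemma measurable_borel (A : set Rm) : measurable A -> borel A.
Proof.
move=> mA.
have sigma_borel : sigma_algebra setT borel.
  split.
  - apply: (borel_ext _ _ (borel_inter _ _ (borel_ray 0) (borel_compl _ (borel_ray 0)))).
    by move=> x; split => // -[].
  - by move=> B bB; apply: (borel_ext _ _ (borel_compl _ bB)) => x; split => [h|[]].
  - move=> F bF; apply: (borel_ext _ _ (borel_union F bF)) => x.
    by split => [[n h]|[n _ h]]; exists n.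
apply: (smallest_sub sigma_borel _ mA) => _ [[a b] _ <-].
have b_gt : borel (fun x => Rlt a x).
  apply: (borel_ext _ _ (borel_compl _ (borel_le a))) => x.
  by split; [exact: Rnot_le_lt | exact: Rlt_not_le].
apply: (borel_ext _ _ (borel_inter _ _ b_gt (borel_le b))) => x /=.
rewrite in_itv /=; split; first by move=> [/RltP -> /RleP ->].
by move=> /andP[/RltP h1 /RleP h2].
Qed.

Lemma borel_or (A B : R -> Prop) : borel A -> borel B -> borel (fun x => A x \/ B x).
Proof.
move=> /borel_measurable mA /borel_measurable mB.
by apply: measurable_borel; apply: measurableU.
Qed.

End BorelMeasurable.
Section LebesgueMeasureOnR.
Local Open Scope classical_set_scope.
Local Open Scope ring_scope.

Lemma eseries_of_infinite_sum (u : nat -> R) (s : R) :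
  infinite_sum u s -> (\sum_(0 <= k <oo) (u k)%:E = s%:E)%E.
Proof.
move=> hs; apply: cvg_lim => //; apply/fine_cvgP; split.
  by near=> n; rewrite sumEFin.
rewrite [X in X @ _ --> _](_ : _ = (fun n => \sum_(0 <= k < n) u k)); last first.
  by apply/funext => n /=; rewrite sumEFin.
rewrite -cvg_shiftS /=; apply/(@cvgrPdist_lt _ R^o) => e /RltP e0.
have [N HN] := hs e e0; near=> n.
have nN : (n >= N)%coq_nat by apply/ssrnat.leP; near: n; exact: nbhs_infty_ge.
by move: (HN n nN); rewrite /R_dist sum_f_R0E => /RltP; rewrite distrC RabsE.
Unshelve. all: by end_near. Qed.

Lemma infinite_sum_of_eseries (u : nat -> R) (s : R) : (forall n, 0 <= u n) ->
  (\sum_(0 <= k <oo) (u k)%:E = s%:E)%E -> infinite_sum u s.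
Proof.
move=> u0 hs.
have hc : (fun n => \sum_(0 <= k < n) (u k)%:E)%E @ \oo --> s%:E.
  by rewrite -hs; apply: is_cvg_ereal_nneg_natsum => n _; rewrite lee_fin.
move/fine_cvgP : hc => [_ hc].
rewrite [X in X @ _ --> _](_ : _ = (fun n => \sum_(0 <= k < n) u k)) in hc; last first.
  by apply/funext => n /=; rewrite sumEFin.
move: hc; rewrite -cvg_shiftS /= => /(@cvgrPdist_lt _ R^o) hc e /RltP e0.
have [N _ HN] := hc e e0; exists N => n /ssrnat.leP nN.
by rewrite /R_dist sum_f_R0E; apply/RltP; rewrite RabsE distrC; exact: HN.
Qed.

Lemma lebesgue_open_itv_cover (A : set Rm) : lam A =
  ereal_inf [set (\sum_(k <oo) wlength idfun (F k))%E | F in open_itv_cover A].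
Proof. exact: (@outer_measure_open_itv_cover R A). Qed.

Lemma lebesgue_le_cover_sum (A : R -> Prop) (s : R) :
  is_cover_sum A s -> (lam A <= s%:E)%E.
Proof.
move=> [a [b [ab [cov hs]]]].
rewrite lebesgue_open_itv_cover; apply: ereal_inf_lbound.
exists (fun k => `]a k, b k[%classic).
  split; first by move=> k; exists (a k, b k).
  move=> x /cov [n /= [h1 h2]]; exists n => //=.
  by rewrite in_itv /=; apply/andP; split; apply/RltP.
rewrite -(eseries_of_infinite_sum _ _ hs); apply: eq_eseriesr => k _.
rewrite wlength_itv /= lte_fin.
case: ifP => // /negbT; rewrite -leNgt => /RleP h.
by rewrite (Rle_antisym _ _ (ab k) h) /= Rminus_diag.
Qed.

Definition finite_measure (A : R -> Prop) : Prop := (lam A < +oo)%E.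

Definition mu (A : R -> Prop) : R := fine (lam A).

Lemma finite_measure_fin_num (A : R -> Prop) : finite_measure A -> lam A \is a fin_num.
Proof. by move=> Afin; rewrite ge0_fin_numE // outer_measure_ge0. Qed.

Lemma cover_sum_approx (A : R -> Prop) (e : R) : finite_measure A -> 0 < e ->
  exists s, is_cover_sum A s /\ s < mu A + e.
Proof.
move=> /finite_measure_fin_num Af e0.
have Ainf : ereal_inf [set (\sum_(k <oo) wlength idfun (F k))%E
    | F in open_itv_cover (A : set Rm)] \is a fin_num by rewrite -lebesgue_open_itv_cover.
have [_ [F [Fitv AF] <-]] := lb_ereal_inf_adherent e0 Ainf.
rewrite -lebesgue_open_itv_cover => Fsum.
pose a k := (sval (cid (Fitv k))).1.
pose b k := Rmax (a k) (sval (cid (Fitv k))).2.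
have Fk k : F k = `]a k, (sval (cid (Fitv k))).2[%classic.
  by rewrite /a; case: cid => /= -[x y].
have wl k : wlength idfun (F k) = (b k - a k)%:E.
  rewrite Fk wlength_itv /= lte_fin /b; case: ifP => h.
    by rewrite Rmax_right //; apply: Rlt_le; apply/RltP.
  by move/negbT : h; rewrite -leNgt => /RleP h; rewrite Rmax_left // subrr.
have ab k : 0 <= b k - a k by rewrite subr_ge0; apply/RleP; exact: Rmax_l.
set S := (\sum_(k <oo) wlength idfun (F k))%E in Fsum.
have Sf : S \is a fin_num.
  rewrite ge0_fin_numE; last by apply: nneseries_ge0 => k _ _; rewrite wl lee_fin.
  by apply: (lt_trans Fsum); rewrite -(fineK Af) -EFinD ltry.
exists (fine S); split; last by move: Fsum; rewrite -(fineK Sf) -(fineK Af) -EFinD lte_fin.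
exists a, b; split; first by move=> n; exact: Rmax_l.
split; last first.
  by apply: infinite_sum_of_eseries => //; rewrite fineK // /S; apply: eq_eseriesr.
move=> x /AF [n _]; rewrite Fk /= in_itv /= => /andP[/RltP h1 /RltP h2].
by exists n; split => //; apply: (Rlt_le_trans _ _ _ h2); exact: Rmax_r.
Qed.

Lemma is_outer_measure_mu (A : R -> Prop) : finite_measure A -> is_outer_measure A (mu A).
Proof.
move=> Afin; split.
  move=> s /lebesgue_le_cover_sum.
  by rewrite -(fineK (finite_measure_fin_num _ Afin)) lee_fin => /RleP.
move=> r' hr'; apply: Rnot_lt_le => /RltP hlt.
have [s [cov s_lt]] := cover_sum_approx A (r' - mu A)%R Afin ltac:(by rewrite subr_gt0).
have /RleP r'_le_s := hr' s cov.
by move: s_lt; rewrite addrC subrK => /lt_le_trans /(_ r'_le_s); rewrite ltxx.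
Qed.

Lemma leb_mu (A : R -> Prop) : finite_measure A -> leb A = mu A.
Proof.
move=> /is_outer_measure_mu H; rewrite /leb; set r := epsilon _ _.
have Hr : is_outer_measure A r.
  by apply: (epsilon_spec (inhabits 0%R) (is_outer_measure A)); exists (mu A).
by apply: Rle_antisym; [apply: H.2; apply: Hr.1 | apply: Hr.2; apply: H.1].
Qed.

(** Lebesgue measure scales by [|c|] under the affine change of variables
    [x |-> c x + d]; the case [c > 0] follows from uniqueness of Lebesgue
    measure, the case [c < 0] then from reflection invariance. *)
Lemma lebesgue_affine_pos (c d : R) (S : set Rm) : 0 < c -> measurable S ->
  lam S = (c%:E * lam [set x : Rm | S (c * x + d)%R])%E.
Proof.
move=> c0 mS; have c0' : 0 <= c by exact: ltW.
(* the measurability of the map is needed to form the pushforward measure *)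
have mf : measurable_fun setT (fun x : Rm => (c * x + d : Rm)) by apply: measurable_funD.
apply: (@lebesgue_measure_unique R
  (mscale (NngNum c0') (pushforward lam (fun x : Rm => (c * x + d : Rm)))) _ S mS).
move=> _ [[a b] _ <-]; rewrite /mscale /pushforward /=; unfold mscale => /=.
rewrite [X in (_ * lebesgue_measure X)%E](_ : _ = `](a - d) / c, (b - d) / c]%classic).
  rewrite !lebesgue_measure_itv /= !lte_fin ltr_pM2r ?invr_gt0 // ltrD2r.
  case: ifP => _; last by rewrite mule0.
  rewrite -EFinB -EFinM -mulrBl mulrCA mulfV ?gt_eqF // mulr1.
  by rewrite opprB addrA subrK.
apply/seteqP; split => x /=; rewrite !in_itv /= => /andP[h1 h2]; apply/andP; split.
- by rewrite ltr_pdivrMr // ltrBlDr mulrC.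
- by rewrite ler_pdivlMr // lerBrDr mulrC.
- by move: h1; rewrite ltr_pdivrMr // ltrBlDr mulrC.
- by move: h2; rewrite ler_pdivlMr // lerBrDr mulrC.
Qed.

Lemma lebesgue_affine (c d : R) (S : set Rm) : c != 0 -> measurable S ->
  lam S = (`|c|%:E * lam [set x : Rm | S (c * x + d)%R])%E.
Proof.
move=> c0 mS; have [cp|cn] := ltP 0 c.
  by rewrite gtr0_norm //; exact: lebesgue_affine_pos.
have cn' : c < 0 by rewrite lt_neqAle c0 cn.
rewrite ltr0_norm // (lebesgue_affine_pos (- c) d S _ mS) ?oppr_gt0 //; congr (_ * _)%E.
have mT : measurable [set x : Rm | S (- c * x + d)].
  have : measurable_fun setT (fun x : Rm => (- c * x + d : Rm)) by apply: measurable_funD.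
  by move=> /(_ measurableT _ mS); rewrite setTI.
rewrite -(lebesgue_measureN mT) /pushforward.
by congr (lam _); apply/seteqP; split => x /=; rewrite mulrN mulNr opprK.
Qed.

End LebesgueMeasureOnR.

Definition pullback (S : R -> Prop) (c d : R) : R -> Prop := fun x => S (c * x + d).

Lemma mu_ge0 (A : R -> Prop) : 0 <= mu A.
Proof. by apply/RleP; apply: fine_ge0; exact: outer_measure_ge0. Qed.

Lemma mu_ext (A B : R -> Prop) : (forall x, A x <-> B x) -> mu A = mu B.
Proof. by move=> AB; rewrite (_ : A = B) // predeqE. Qed.

Lemma mu_empty (A : R -> Prop) : (forall x, ~ A x) -> mu A = 0.
Proof.
move=> A0; rewrite /mu (_ : A = set0) ?measure0 //.
by rewrite predeqE => x; split => // /A0.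
Qed.

Lemma finite_measure_sub (A B : R -> Prop) :
  (forall x, A x -> B x) -> finite_measure B -> finite_measure A.
Proof. by move=> AB; apply: le_lt_trans; apply: le_outer_measure. Qed.

Lemma finite_measure_bounded (A : R -> Prop) (a b : R) :
  (forall x, A x -> a <= x <= b) -> finite_measure A.
Proof.
move=> hA; apply: (@finite_measure_sub _ `[a, b]%classic).
  by move=> x /hA [h1 h2] /=; rewrite in_itv /=; apply/andP; split; exact/RleP.
by rewrite /finite_measure lebesgue_measure_itv /=; case: ifP => _; rewrite ?ltry.
Qed.

Lemma mu_le (A B : R -> Prop) :
  finite_measure B -> (forall x, A x -> B x) -> mu A <= mu B.
Proof.
move=> Bf AB; have Af := finite_measure_sub _ _ AB Bf.
apply/RleP; apply: fine_le; rewrite ?finite_measure_fin_num //.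
exact: le_outer_measure.
Qed.

Lemma finite_measure_or (A B : R -> Prop) : borel A -> borel B ->
  finite_measure A -> finite_measure B -> finite_measure (fun x => A x \/ B x).
Proof.
move=> /borel_measurable mA /borel_measurable mB /finite_measure_fin_num Af
  /finite_measure_fin_num Bf.
apply: (le_lt_trans (measureU2 _ mA mB)).
by rewrite -ge0_fin_numE ?adde_ge0 ?outer_measure_ge0 // fin_numD Af Bf.
Qed.

Lemma mu_union (A B : R -> Prop) : borel A -> borel B ->
  finite_measure A -> finite_measure B -> (forall x, A x -> B x -> False) ->
  mu (fun x => A x \/ B x) = mu A + mu B.
Proof.
move=> /borel_measurable mA /borel_measurable mB Af Bf AB.
rewrite /mu (_ : (fun x => A x \/ B x) = (A `|` B)%classic) //.
rewrite measureU //; last by rewrite predeqE => x; split => // -[] /AB.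
by rewrite fineD // finite_measure_fin_num.
Qed.

Lemma mu_union_le (A B : R -> Prop) : borel A -> borel B ->
  finite_measure A -> finite_measure B -> mu (fun x => A x \/ B x) <= mu A + mu B.
Proof.
move=> bA bB Af Bf; have /finite_measure_fin_num ABf := finite_measure_or _ _ bA bB Af Bf.
move: bA bB Af Bf => /borel_measurable mA /borel_measurable mB
  /finite_measure_fin_num Af /finite_measure_fin_num Bf.
have -> : fine (lam A) + fine (lam B) = fine (lam A + lam B)%E by rewrite fineD.
by apply/RleP; apply: fine_le; rewrite ?fin_numD ?Af ?Bf //; exact: measureU2.
Qed.

Lemma mu_itv (a b : R) : a <= b -> mu (fun x => a < x < b) = b - a.
Proof.
move=> ab; rewrite /mu (_ : (fun x => a < x < b) = `]a, b[%classic).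
  rewrite lebesgue_measure_itv /= lte_fin.
  case: ifP => //= /negbT; rewrite -leNgt => /RleP ba.
  by rewrite (Rle_antisym _ _ ab ba) Rminus_diag.
rewrite predeqE => x /=; rewrite in_itv /=.
by split => [[/RltP -> /RltP ->] | /andP[/RltP ? /RltP ?]].
Qed.

Lemma mu_union4 (P1 P2 P3 P4 : R -> Prop) :
  borel P1 -> borel P2 -> borel P3 -> borel P4 ->
  finite_measure P1 -> finite_measure P2 -> finite_measure P3 -> finite_measure P4 ->
  (forall x, P1 x -> P2 x -> False) -> (forall x, P3 x -> P4 x -> False) ->
  (forall x, P1 x \/ P2 x -> P3 x \/ P4 x -> False) ->
  mu (fun x => (P1 x \/ P2 x) \/ (P3 x \/ P4 x)) = (mu P1 + mu P2) + (mu P3 + mu P4).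
Proof.
move=> b1 b2 b3 b4 f1 f2 f3 f4 d12 d34 d.
by rewrite mu_union ?mu_union //;
  [apply: borel_or | apply: borel_or | apply: finite_measure_or | apply: finite_measure_or].
Qed.

Lemma mu_eq_off_points (A B : R -> Prop) (p q : R) : borel A -> borel B ->
  (forall x, x <> p -> x <> q -> (A x <-> B x)) -> mu A = mu B.
Proof.
have pq_null : lam ([set p] `|` [set q] : set Rm)%classic = 0%E.
  by rewrite measureU0 //; exact: lebesgue_measure_set1.
have le_AB (A' B' : R -> Prop) : borel B' ->
    (forall x, x <> p -> x <> q -> A' x -> B' x) -> (lam A' <= lam B')%E.
  move=> /borel_measurable mB' AB.
  apply: (@le_trans _ _ (lam (B' `|` ([set p] `|` [set q]) : set Rm)%classic)).
    apply: le_outer_measure => x Ax.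
    case: (Req_dec x p) => [->|xp]; first by right; left.
    case: (Req_dec x q) => [->|xq]; first by right; right.
    by left; apply: AB.
  by rewrite measureU0 //; apply: measurableU.
move=> bA bB AB; rewrite /mu; congr fine; apply/eqP; rewrite eq_le.
by apply/andP; split; apply: le_AB => // x xp xq /(AB x xp xq).
Qed.

Lemma borel_pullback (S : R -> Prop) (c d : R) : borel S -> borel (pullback S c d).
Proof.
move=> /borel_measurable mS; apply: measurable_borel.
have : measurable_fun setT (fun x : Rm => (c * x + d)%R : Rm) by apply: measurable_funD.
by move=> /(_ measurableT _ mS); rewrite setTI.
Qed.

Lemma lebesgue_pullback (S : R -> Prop) (c d : R) : borel S -> c <> 0 ->
  lam (pullback S c d) = ((Rabs c)^-1%:E * lam S)%E.
Proof.
move=> /borel_measurable mS /eqP c0.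
by rewrite (lebesgue_affine c d S c0 mS) muleA -EFinM RabsE mulVf ?normr_eq0 // mul1e.
Qed.

Lemma finite_measure_pullback (S : R -> Prop) (c d : R) : borel S -> c <> 0 ->
  finite_measure S -> finite_measure (pullback S c d).
Proof.
move=> bS c0 /finite_measure_fin_num Sf.
rewrite /finite_measure lebesgue_pullback // -ge0_fin_numE; first exact: fin_numM.
by rewrite mule_ge0 ?outer_measure_ge0 // lee_fin invr_ge0; apply/RleP; exact: Rabs_pos.
Qed.

Lemma mu_pullback (S : R -> Prop) (c d : R) : borel S -> c <> 0 ->
  finite_measure S -> mu (pullback S c d) = mu S / Rabs c.
Proof.
move=> bS c0 /finite_measure_fin_num Sf.
by rewrite /mu lebesgue_pullback // fineM //= RdivE mulrC.
Qed.

Definition segment (lo hi : R) (lo_in hi_in : bool) (y : R) : Prop :=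
  (if lo_in then lo <= y else lo < y) /\ (if hi_in then y <= hi else y < hi).

Lemma borel_segment (lo hi : R) (lo_in hi_in : bool) : borel (segment lo hi lo_in hi_in).
Proof.
apply: borel_inter; last by case: hi_in; [exact: borel_le | exact: borel_ray].
case: lo_in.
  apply: (borel_ext _ _ (borel_compl _ (borel_ray lo))) => x.
  by split; [exact: Rnot_lt_le | exact: Rle_not_lt].
apply: (borel_ext _ _ (borel_compl _ (borel_le lo))) => x.
by split; [exact: Rnot_le_lt | exact: Rlt_not_le].
Qed.

Lemma mu_inter_segment (A : R -> Prop) (lo hi : R) (lo_in hi_in : bool) : borel A ->
  mu (inter A (segment lo hi lo_in hi_in)) = mu (fun y => A y /\ lo < y < hi).
Proof.
move=> bA; apply: (mu_eq_off_points _ _ lo hi).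
- exact: borel_inter (borel_segment _ _ _ _).
- by apply: borel_inter (borel_segment lo hi false false).
- move=> x xlo xhi; rewrite /inter /segment.
  by case: lo_in; case: hi_in; split => -[Ax [h1 h2]]; split => //; split; lra.
Qed.

Lemma segment_split (lo mid hi : R) (lo_in hi_in : bool) (x : R) : lo < mid <= hi ->
  segment lo hi lo_in hi_in x <->
  segment lo mid lo_in false x \/ segment mid hi true hi_in x.
Proof.
rewrite /segment => hmid; case: lo_in; case: hi_in; split;
  try (move=> [h1 h2]; case: (Rlt_le_dec x mid) => h; [left | right]; split; lra);
  case=> -[h1 h2]; split; lra.
Qed.

Lemma segment_split_disjoint (lo mid hi : R) (lo_in hi_in : bool) (x : R) :
  segment lo mid lo_in false x -> segment mid hi true hi_in x -> False.
Proof. by rewrite /segment => -[_ h1] [h2 _]; lra. Qed.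

Definition affine_branch (f : R -> R) (D S : R -> Prop) (c d : R) : Prop :=
  c <> 0 /\ (forall x, D x <-> S (c * x + d)) /\ (forall x, D x -> f x = c * x + d).

Lemma affine_branch_preimage (f : R -> R) (D S A : R -> Prop) (c d x : R) :
  affine_branch f D S c d -> D x /\ A (f x) <-> pullback (inter A S) c d x.
Proof.
move=> [_ [DS fD]]; rewrite /pullback /inter; split.
  by move=> [Dx]; rewrite fD // => Afx; split => //; apply/DS.
move=> [Ay Sy]; have Dx : D x by apply/DS.
by split => //; rewrite fD.
Qed.

Section TwoBranches.
Variables (f : R -> R) (A : R -> Prop) (lo mid hi : R) (lo_in hi_in : bool).
Variables (S1 S2 : R -> Prop) (c1 d1 c2 d2 : R).
Hypothesis mid_inside : lo < mid <= hi.
Hypothesis branch1 : affine_branch f (segment lo mid lo_in false) S1 c1 d1.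
Hypothesis branch2 : affine_branch f (segment mid hi true hi_in) S2 c2 d2.

Lemma two_branches_preimage (x : R) :
  segment lo hi lo_in hi_in x /\ A (f x) <->
  pullback (inter A S1) c1 d1 x \/ pullback (inter A S2) c2 d2 x.
Proof.
rewrite -(affine_branch_preimage _ _ _ _ _ _ _ branch1).
rewrite -(affine_branch_preimage _ _ _ _ _ _ _ branch2) (segment_split _ mid) //.
tauto.
Qed.

Hypotheses (bA : borel A) (bS1 : borel S1) (bS2 : borel S2).

Lemma borel_two_branches : borel (fun x => segment lo hi lo_in hi_in x /\ A (f x)).
Proof.
apply: (borel_ext _ _ _ (fun x => iff_sym (two_branches_preimage x))).
by apply: borel_or; apply: borel_pullback; apply: borel_inter.
Qed.

Lemma mu_two_branches : finite_measure A ->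
  mu (fun x => segment lo hi lo_in hi_in x /\ A (f x)) =
  mu (inter A S1) / Rabs c1 + mu (inter A S2) / Rabs c2.
Proof.
move=> Af; have [c1_0 _] := branch1; have [c2_0 _] := branch2.
have finite_piece (S : R -> Prop) : finite_measure (inter A S).
  by apply: finite_measure_sub Af => y [].
rewrite (mu_ext _ _ two_branches_preimage) mu_union.
- by rewrite !mu_pullback //; apply: borel_inter.
- by apply: borel_pullback; apply: borel_inter.
- by apply: borel_pullback; apply: borel_inter.
- by apply: finite_measure_pullback => //; apply: borel_inter.
- by apply: finite_measure_pullback => //; apply: borel_inter.
- move=> x /(affine_branch_preimage _ _ _ _ _ _ _ branch1) [h1 _].
  move=> /(affine_branch_preimage _ _ _ _ _ _ _ branch2) [h2 _].
  exact: segment_split_disjoint h1 h2.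
Qed.

End TwoBranches.

Arguments borel_two_branches {f A lo mid hi lo_in hi_in S1 S2 c1 d1 c2 d2}.
Arguments mu_two_branches {f A lo mid hi lo_in hi_in S1 S2 c1 d1 c2 d2}.

Lemma finite_measure_unit (A : R -> Prop) : subset01 A -> finite_measure A.
Proof. by move=> sA; apply: (finite_measure_bounded _ 0 1) => x /sA. Qed.

Lemma leb_split_halves (B : R -> Prop) : borel B -> subset01 B ->
  leb B = leb (inter B I_left) + leb (inter B I_right).
Proof.
move=> bB sB; have fin_part (P : R -> Prop) : finite_measure (inter B P).
  by apply: finite_measure_unit => x [/sB].
rewrite !leb_mu //; last exact: finite_measure_unit.
rewrite -mu_union //.
- apply: mu_ext => x; rewrite /inter /I_left /I_right; split; last by case=> -[].
  by move=> Bx; have [? ?] := sB x Bx; case: (Rlt_le_dec x (1/2)) => ?; [left|right].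
- exact: borel_inter (borel_segment 0 (1/2) true false).
- exact: borel_inter (borel_segment (1/2) 1 true true).
- by rewrite /inter /I_left /I_right => x [_ ?] [_ ?]; lra.
Qed.

Lemma leb_inter_left (A : R -> Prop) : borel A -> subset01 A ->
  leb (inter A I_left) = mu (fun y => A y /\ 0 < y < 1/2).
Proof.
move=> bA sA; rewrite leb_mu; last by apply: finite_measure_unit => x [/sA].
exact: (mu_inter_segment A 0 (1/2) true false).
Qed.

Lemma leb_inter_right (A : R -> Prop) : borel A -> subset01 A ->
  leb (inter A I_right) = mu (fun y => A y /\ 1/2 < y < 1).
Proof.
move=> bA sA; rewrite leb_mu; last by apply: finite_measure_unit => x [/sA].
exact: (mu_inter_segment A (1/2) 1 true true).
Qed.

Lemma preim_left (f : R -> R) (A : R -> Prop) (x : R) :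
  inter (preim f A) I_left x <-> segment 0 (1/2) true false x /\ A (f x).
Proof.
rewrite /inter /preim /I_left /unit_interval /segment /=.
by split => [[[_ Afx] h] | [h Afx]]; split => //; split => //; lra.
Qed.

Lemma preim_right (f : R -> R) (A : R -> Prop) (x : R) :
  inter (preim f A) I_right x <-> segment (1/2) 1 true true x /\ A (f x).
Proof.
rewrite /inter /preim /I_right /unit_interval /segment /=.
by split => [[[_ Afx] h] | [h Afx]]; split => //; split => //; lra.
Qed.

Section FourBranchMaps.

(** All three maps have the same shape: four affine branches on
    [[0,p1)], [[p1,1/2)], [[1/2,p3)], [[p3,1]], onto the lower, upper, upper
    and lower half of [[0,1]] respectively. *)
Variables (f : R -> R) (p1 p3 c1 d1 c2 d2 c3 d3 c4 d4 : R).
Hypothesis branch1 :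
  affine_branch f (segment 0 p1 true false) (segment 0 (1/2) true false) c1 d1.
Hypothesis branch2 :
  affine_branch f (segment p1 (1/2) true false) (segment (1/2) 1 true false) c2 d2.
Hypothesis branch3 :
  affine_branch f (segment (1/2) p3 true false) (segment (1/2) 1 false true) c3 d3.
Hypothesis branch4 :
  affine_branch f (segment p3 1 true true) (segment 0 (1/2) true true) c4 d4.
Hypotheses (p1_inside : 0 < p1 <= 1/2) (p3_inside : 1/2 < p3 <= 1).
Variable A : R -> Prop.
Hypotheses (bA : borel A) (sA : subset01 A).

Lemma leb_preim_left :
  leb (inter (preim f A) I_left) =
  mu (fun y => A y /\ 0 < y < 1/2) / Rabs c1 + mu (fun y => A y /\ 1/2 < y < 1) / Rabs c2.
Proof.
rewrite leb_mu; last by apply: finite_measure_unit => x [[]].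
rewrite (mu_ext _ _ (preim_left f A)) (mu_two_branches p1_inside branch1 branch2) //;
  try exact: borel_segment; last exact: finite_measure_unit.
by rewrite !mu_inter_segment.
Qed.

Lemma leb_preim_right :
  leb (inter (preim f A) I_right) =
  mu (fun y => A y /\ 1/2 < y < 1) / Rabs c3 + mu (fun y => A y /\ 0 < y < 1/2) / Rabs c4.
Proof.
rewrite leb_mu; last by apply: finite_measure_unit => x [[]].
rewrite (mu_ext _ _ (preim_right f A)) (mu_two_branches p3_inside branch3 branch4) //;
  try exact: borel_segment; last exact: finite_measure_unit.
by rewrite !mu_inter_segment.
Qed.

Lemma borel_preim : borel (preim f A).
Proof.
have bL := borel_two_branches p1_inside branch1 branch2 bA (borel_segment _ _ _ _)
  (borel_segment _ _ _ _).
have bR := borel_two_branches p3_inside branch3 branch4 bA (borel_segment _ _ _ _)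
  (borel_segment _ _ _ _).
apply: (borel_ext _ _ (borel_or _ _ bL bR)) => x.
rewrite -(preim_left f A x) -(preim_right f A x) /inter /preim /I_left /I_right.
split; first by case=> -[].
by move=> [[? ?] Afx]; case: (Rlt_le_dec x (1/2)) => ?; [left|right].
Qed.

End FourBranchMaps.

Arguments leb_preim_left {f p1 c1 d1 c2 d2}.
Arguments leb_preim_right {f p3 c3 d3 c4 d4}.
Arguments borel_preim {f p1 p3 c1 d1 c2 d2 c3 d3 c4 d4}.

Ltac solve_with_slopes := rewrite /Rabs; repeat case: Rcase_abs => ?; first [lra | field].

Ltac prove_affine_branch :=
  split; [lra | split;
    [ move=> x; rewrite /segment /=; split => -[? ?]; split; lra
    | move=> x; rewrite /segment /= => -[? ?]; repeat case: Rlt_dec => ?; lra ]].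

Lemma tau1_branches :
  affine_branch tau1 (segment 0 (3/8) true false) (segment 0 (1/2) true false) (4/3) 0 /\
  affine_branch tau1 (segment (3/8) (1/2) true false) (segment (1/2) 1 true false) 4 (-1) /\
  affine_branch tau1 (segment (1/2) (5/8) true false) (segment (1/2) 1 false true) (-4) 3 /\
  affine_branch tau1 (segment (5/8) 1 true true) (segment 0 (1/2) true true) (-4/3) (4/3).
Proof. by rewrite /tau1; split; [|split; [|split]]; prove_affine_branch. Qed.

Lemma tau2_branches :
  affine_branch tau2 (segment 0 (1/6) true false) (segment 0 (1/2) true false) 3 0 /\
  affine_branch tau2 (segment (1/6) (1/2) true false) (segment (1/2) 1 true false) (3/2) (1/4) /\
  affine_branch tau2 (segment (1/2) (5/6) true false) (segment (1/2) 1 false true) (-3/2) (7/4) /\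
  affine_branch tau2 (segment (5/6) 1 true true) (segment 0 (1/2) true true) (-3) 3.
Proof. by rewrite /tau2; split; [|split; [|split]]; prove_affine_branch. Qed.

Lemma tau_branches :
  affine_branch tau (segment 0 (1/6) true false) (segment 0 (1/2) true false) 3 0 /\
  affine_branch tau (segment (1/6) (1/2) true false) (segment (1/2) 1 true false) (3/2) (1/4) /\
  affine_branch tau (segment (1/2) (2/3) true false) (segment (1/2) 1 false true) (-3) (5/2) /\
  affine_branch tau (segment (2/3) 1 true true) (segment 0 (1/2) true true) (-3/2) (3/2).
Proof. by rewrite /tau /tau2; split; [|split; [|split]]; prove_affine_branch. Qed.

(** [tau1] and [tau2] preserve the densities [f1] and [f2]: after the change of
    variables on the four branches, both sides are the same combination of the
    measures of the two halves of [A]. *)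
Lemma tau1_preserves_density : preserves_step_density (3/2) (1/2) tau1.
Proof.
move=> A bA sA; have [b1 [b2 [b3 b4]]] := tau1_branches.
rewrite /step_integral (leb_preim_left b1 b2 ltac:(lra)) //.
rewrite (leb_preim_right b3 b4 ltac:(lra)) // leb_inter_left // leb_inter_right //.
solve_with_slopes.
Qed.

Lemma tau2_preserves_density : preserves_step_density (2/3) (4/3) tau2.
Proof.
move=> A bA sA; have [b1 [b2 [b3 b4]]] := tau2_branches.
rewrite /step_integral (leb_preim_left b1 b2 ltac:(lra)) //.
rewrite (leb_preim_right b3 b4 ltac:(lra)) // leb_inter_left // leb_inter_right //.
solve_with_slopes.
Qed.

Lemma tau_preserves_lebesgue : preserves_lebesgue tau.
Proof.
move=> A bA sA; have [b1 [b2 [b3 b4]]] := tau_branches.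
have bP := borel_preim b1 b2 b3 b4 ltac:(lra) ltac:(lra) _ bA.
rewrite (leb_split_halves A) // (leb_split_halves (preim tau A)) //; last by move=> x [].
rewrite (leb_preim_left b1 b2 ltac:(lra)) //.
rewrite (leb_preim_right b3 b4 ltac:(lra)) // leb_inter_left // leb_inter_right //.
solve_with_slopes.
Qed.

Lemma convex_combination_densities (x : R) :
  1 = 2/5 * step_density (3/2) (1/2) x + 3/5 * step_density (2/3) (4/3) x.
Proof. by rewrite /step_density; case: Rlt_dec => _; field. Qed.

Lemma tau_between (x : R) : unit_interval x -> tau1 x <= tau x <= tau2 x.
Proof.
rewrite /unit_interval /tau1 /tau /tau2 => -[? ?].
by repeat case: Rlt_dec => ?; split; lra.
Qed.

Section MeasurableGraph.
Local Open Scope classical_set_scope.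
Local Open Scope ring_scope.

Lemma borel_affine_agreement (eta : R -> R) (c d : R) :
  (forall x, unit_interval x -> unit_interval (eta x)) -> borel_measurable01 eta ->
  borel (fun x => unit_interval x /\ eta x = (c * x + d)%coqR).
Proof.
move=> eta01 eta_mble.
have in_unit x : unit_interval x <-> x \in `[0%R, 1%R].
  rewrite in_itv /=; split; first by move=> [/RleP -> /RleP ->].
  by move=> /andP[/RleP ? /RleP ?]; split.
have meta : measurable_fun (`[0%R, 1%R] : set Rm) (fun x : Rm => (eta x : Rm)).
  move=> _ Y mY.
  have Y01 : subset01 (Y `&` `[0%R, 1%R]) by move=> y [_ /in_unit].
  have := eta_mble _ (measurable_borel _ (measurableI _ _ mY (measurable_itv _))) Y01.
  move=> /borel_measurable; congr measurable; rewrite predeqE => x /=.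
  rewrite /Defs.preim -!in_unit; split => [[x01 [Yx _]] | [x01 Yx]]; first by split.
  by split => //; split => //; apply/in_unit; exact: eta01.
have mg : measurable_fun (`[0%R, 1%R] : set Rm) (fun x : Rm => (c * x + d : Rm)).
  by apply: measurable_funD.
have := measurable_funB meta mg (measurable_itv _) (measurable_set1 0%R).
move=> /measurable_borel hb; apply: (borel_ext _ _ hb) => x /=.
rewrite -in_unit; split => [[x01 /eqP] | [x01 ->]]; last by rewrite subrr.
by rewrite subr_eq0 => /eqP.
Qed.

End MeasurableGraph.

Definition agrees (b : bool) (P : Prop) : Prop := if b then P else ~ P.

Lemma borel_agrees (b : bool) (P : R -> Prop) : borel P -> borel (fun y => agrees b (P y)).
Proof. by case: b => //= /borel_compl. Qed.

Lemma mu_agrees (S P : R -> Prop) (b : bool) : (forall y, S y -> agrees b (P y)) ->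
  mu (fun y => S y /\ P y) = if b then mu S else 0.
Proof.
case: b => /= SP; last by apply: mu_empty => y [/SP].
by apply: mu_ext => y; split => [[] // | Sy]; split => //; exact: SP.
Qed.

(** No subfamily of the weights [1/4, 1/4, 2/3, 2/3] sums to [1]. *)
Lemma no_weight_one (m : R) (b1 b2 b3 b4 : bool) :
  m = ((if b1 then m else 0) / 4 + (if b2 then m else 0) / 4) +
      ((if b3 then m else 0) / (3/2) + (if b4 then m else 0) / (3/2)) -> m = 0.
Proof. by case: b1; case: b2; case: b3; case: b4 => /=; lra. Qed.

Definition null (S : R -> Prop) : Prop := borel S /\ finite_measure S /\ mu S = 0.

Lemma null_exists_bool (F : bool -> R -> Prop) :
  (forall b, null (F b)) -> null (fun y => exists b, F b y).
Proof.
move=> nF; have [bT [fT mT]] := nF true; have [bF [fF mF]] := nF false.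
have E y : (exists b, F b y) <-> F true y \/ F false y.
  by split => [[[]]|[]]; [left|right|exists true|exists false].
split; first by apply: (borel_ext _ _ (borel_or _ _ bT bF)) => y; rewrite E.
split; first by apply: (finite_measure_sub _ _ (fun y => proj1 (E y))); exact: finite_measure_or.
rewrite (mu_ext _ _ E); apply: Rle_antisym; last exact: mu_ge0.
by apply: Rle_trans (mu_union_le _ _ bT bF fT fF) _; rewrite mT mF; lra.
Qed.

(** The upper half [J = (1/2,1)]; exactly four affine branches of [tau1] and
    [tau2] map into it: [4x-1], [-4x+3], [3x/2+1/4] and [-3x/2+7/4]. *)
Definition upper (y : R) : Prop := 1/2 < y < 1.

Lemma borel_upper : borel upper.
Proof. exact: borel_segment (1/2) 1 false false. Qed.

Lemma upper_branches (x : R) : unit_interval x ->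
  (upper (tau1 x) -> tau1 x = 4 * x + -1 \/ tau1 x = -4 * x + 3) /\
  (upper (tau2 x) -> tau2 x = 3/2 * x + 1/4 \/ tau2 x = -3/2 * x + 7/4).
Proof.
rewrite /unit_interval /upper /tau1 /tau2 => -[? ?].
by split; repeat case: Rlt_dec => ?; move=> ?; first [lra | left; lra | right; lra].
Qed.

Section NoMeasurableSelection.

Variable eta : R -> R.
Hypothesis eta_unit : forall x, unit_interval x -> unit_interval (eta x).
Hypothesis eta_borel : borel_measurable01 eta.
Hypothesis eta_selects : forall x, unit_interval x -> eta x = tau1 x \/ eta x = tau2 x.
Hypothesis eta_preserves : preserves_lebesgue eta.

(** [y] in [J] is reached by [eta] along the branch [x |-> c x + d]. *)
Definition hit (c d y : R) : Prop := upper y /\ eta ((y - d) / c) = y.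

(** [hit c d] is Borel when the inverse branch maps [J] into [[0,1]], where
    [eta] is known to be measurable. *)
Lemma borel_hit (c d : R) : c <> 0 ->
  (forall y, upper y -> unit_interval ((y - d) / c)) -> borel (hit c d).
Proof.
move=> c0 inv01.
apply: (borel_ext _ _ (borel_inter _ _ borel_upper (borel_pullback _ (/ c) (- d / c)
  (borel_affine_agreement eta c d eta_unit eta_borel)))).
have inv y : / c * y + - d / c = (y - d) / c by field.
move=> y; rewrite /hit /pullback inv; split => [[Jy [_ ->]] | [Jy e]].
  by split => //; field.
by split => //; split; [exact: inv01 | rewrite e; field].
Qed.

Lemma hit_branch (c d x : R) : c <> 0 ->
  hit c d (c * x + d) <-> upper (c * x + d) /\ eta x = c * x + d.
Proof. by move=> c0; rewrite /hit (_ : (c * x + d - d) / c = x) //; field. Qed.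

Lemma preim_upper_subset (S : R -> Prop) : (forall y, S y -> upper y) -> forall x,
  preim eta S x <->
  (pullback (fun y => S y /\ hit 4 (-1) y) 4 (-1) x \/
   pullback (fun y => S y /\ hit (-4) 3 y) (-4) 3 x) \/
  (pullback (fun y => S y /\ hit (3/2) (1/4) y) (3/2) (1/4) x \/
   pullback (fun y => S y /\ hit (-3/2) (7/4) y) (-3/2) (7/4) x).
Proof.
move=> SJ x; rewrite /preim /pullback; split.
- move=> [x01 Sx]; have Jx := SJ _ Sx; have [tau1_J tau2_J] := upper_branches x x01.
  have along c d : c <> 0 -> eta x = c * x + d -> S (c * x + d) /\ hit c d (c * x + d).
    move=> c0 e; split; first by rewrite -e.
    by apply/(hit_branch _ _ _ c0); rewrite -e.
  case: (eta_selects x x01) => e; rewrite e in Jx.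
    by case: (tau1_J Jx) => e1; [left; left | left; right]; apply: along; lra.
  by case: (tau2_J Jx) => e2; [right; left | right; right]; apply: along; lra.
- have back c d : S (c * x + d) /\ hit c d (c * x + d) -> c <> 0 ->
      upper (c * x + d) /\ S (eta x).
    by move=> [Sy hy] c0; move/(hit_branch _ _ _ c0): hy => [Jy e]; rewrite e.
  by case=> [[h|h]|[h|h]]; have [Jy Sy] := back _ _ h ltac:(lra);
    split => //; move: Jy; rewrite /upper /unit_interval; lra.
Qed.

Lemma borel_hits : borel (hit 4 (-1)) /\ borel (hit (-4) 3) /\
  borel (hit (3/2) (1/4)) /\ borel (hit (-3/2) (7/4)).
Proof.
split; [|split; [|split]]; apply: borel_hit; try lra.
all: by rewrite /upper /unit_interval => y ?; lra.
Qed.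

Lemma branch_piece (S : R -> Prop) (c d : R) : borel S -> c <> 0 -> borel (hit c d) ->
  [/\ borel (fun y => S y /\ hit c d y), finite_measure (fun y => S y /\ hit c d y) &
      forall x, pullback (fun y => S y /\ hit c d y) c d x ->
        eta x = c * x + d /\ 1/2 < c * x + d < 1].
Proof.
move=> bS c0 bH; split.
- exact: borel_inter.
- by apply: (finite_measure_bounded _ 0 1) => y [_ [[? ?] _]]; lra.
- by move=> x [_ /(hit_branch _ _ _ c0) [Jy e]].
Qed.

Lemma mu_preim_upper_subset (S : R -> Prop) : borel S -> (forall y, S y -> upper y) ->
  mu (preim eta S) =
  (mu (fun y => S y /\ hit 4 (-1) y) / 4 + mu (fun y => S y /\ hit (-4) 3 y) / 4) +
  (mu (fun y => S y /\ hit (3/2) (1/4) y) / (3/2) +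
   mu (fun y => S y /\ hit (-3/2) (7/4) y) / (3/2)).
Proof.
move=> bS SJ; have [h1 [h2 [h3 h4]]] := borel_hits.
have [b1 f1 e1] := branch_piece S 4 (-1) bS ltac:(lra) h1.
have [b2 f2 e2] := branch_piece S (-4) 3 bS ltac:(lra) h2.
have [b3 f3 e3] := branch_piece S (3/2) (1/4) bS ltac:(lra) h3.
have [b4 f4 e4] := branch_piece S (-3/2) (7/4) bS ltac:(lra) h4.
rewrite (mu_ext _ _ (preim_upper_subset S SJ)) mu_union4.
- by rewrite !mu_pullback //; try lra; solve_with_slopes.
all: try (apply: borel_pullback => //); try (apply: finite_measure_pullback => //; lra).
all: move=> x.
- by move=> /e1 [? ?] /e2 [? ?]; lra.
- by move=> /e3 [? ?] /e4 [? ?]; lra.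
- by move=> [/e1 [? ?]|/e2 [? ?]] [/e3 [? ?]|/e4 [? ?]]; lra.
Qed.

Definition atom (b1 b2 b3 b4 : bool) (y : R) : Prop :=
  upper y /\ agrees b1 (hit 4 (-1) y) /\ agrees b2 (hit (-4) 3 y) /\
  agrees b3 (hit (3/2) (1/4) y) /\ agrees b4 (hit (-3/2) (7/4) y).

(** Every atom of [J] is null: for an atom [S] the identity above reads
    [mu S = w * mu S] where [w] is a sum of a subfamily of [1/4, 1/4, 2/3, 2/3],
    and no such sum equals [1]. *)
Lemma atom_null (b1 b2 b3 b4 : bool) : null (atom b1 b2 b3 b4).
Proof.
have [h1 [h2 [h3 h4]]] := borel_hits.
have bA : borel (atom b1 b2 b3 b4).
  apply: borel_inter; first exact: borel_upper.
  by do 3 (apply: borel_inter; first exact: borel_agrees); exact: borel_agrees.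
have sA : subset01 (atom b1 b2 b3 b4).
  by move=> y [Jy _]; move: Jy; rewrite /upper /unit_interval; lra.
have Af := finite_measure_unit _ sA.
split => //; split => //.
have := eta_preserves _ bA sA.
rewrite !leb_mu //; last by apply: finite_measure_unit => x [].
rewrite mu_preim_upper_subset //; last by move=> y [].
rewrite (mu_agrees _ (hit 4 (-1)) b1); last by move=> y [_ [? _]].
rewrite (mu_agrees _ (hit (-4) 3) b2); last by move=> y [_ [_ [? _]]].
rewrite (mu_agrees _ (hit (3/2) (1/4)) b3); last by move=> y [_ [_ [_ [? _]]]].
rewrite (mu_agrees _ (hit (-3/2) (7/4)) b4); last by move=> y [_ [_ [_ [_ ?]]]].
by move=> /esym; apply: no_weight_one.
Qed.

(** But [J] has measure [1/2] and is the union of the sixteen atoms. *)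
Lemma measure_preserving_selection_absurd : False.
Proof.
have n3 b1 b2 b3 : null (fun y => exists b4, atom b1 b2 b3 b4 y).
  by apply: null_exists_bool => b4; exact: atom_null.
have n2 b1 b2 : null (fun y => exists b3 b4, atom b1 b2 b3 b4 y).
  by apply: null_exists_bool => b3; exact: n3.
have n1 b1 : null (fun y => exists b2 b3 b4, atom b1 b2 b3 b4 y).
  by apply: null_exists_bool => b2; exact: n2.
have [_ [fin0 mu0]] : null (fun y => exists b1 b2 b3 b4, atom b1 b2 b3 b4 y).
  by apply: null_exists_bool => b1; exact: n1.
have decide (P : Prop) : exists b, agrees b P.
  by case: (Classical_Prop.classic P) => h; [exists true | exists false].
have : 1 - 1/2 <= 0.
  rewrite -mu0 -(mu_itv (1/2) 1); last lra.
  apply: (mu_le _ _ fin0) => y Jy.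
  have [b1 a1] := decide (hit 4 (-1) y); have [b2 a2] := decide (hit (-4) 3 y).
  have [b3 a3] := decide (hit (3/2) (1/4) y); have [b4 a4] := decide (hit (-3/2) (7/4) y).
  by exists b1, b2, b3, b4.
lra.
Qed.

End NoMeasurableSelection.

Lemma no_measure_preserving_selection : ~ (exists eta : R -> R,
  (forall x, unit_interval x -> unit_interval (eta x)) /\ borel_measurable01 eta /\
  (forall x, unit_interval x -> eta x = tau1 x \/ eta x = tau2 x) /\ preserves_lebesgue eta).
Proof.
by move=> [eta [eta_unit [eta_borel [eta_selects eta_preserves]]]];
  exact: (measure_preserving_selection_absurd eta).
Qed.

Theorem mainTheorem5 :
  preserves_step_density (3/2) (1/2) tau1 /\
  preserves_step_density (2/3) (4/3) tau2 /\
  (forall x, unit_interval x ->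
     1 = 2/5 * step_density (3/2) (1/2) x + 3/5 * step_density (2/3) (4/3) x) /\
  ~ (exists eta : R -> R,
       (forall x, unit_interval x -> unit_interval (eta x)) /\
       borel_measurable01 eta /\
       (forall x, unit_interval x -> eta x = tau1 x \/ eta x = tau2 x) /\
       preserves_lebesgue eta) /\
  (forall x, unit_interval x -> tau1 x <= tau x <= tau2 x) /\
  preserves_lebesgue tau.
Proof.
split; first exact: tau1_preserves_density.
split; first exact: tau2_preserves_density.
split; first by move=> x _; exact: convex_combination_densities.
split; first exact: no_measure_preserving_selection.
split; first exact: tau_between.
exact: tau_preserves_lebesgue.
Qed.
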